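(* Let $X$ be a complete metric space, let $f:X\to\mathbb{R}$ be a continuous function, let $r_0>0$, $k>0$, assume $f$ is strongly slope-regular on $[0<f<r_0]$, and let $\varphi\in\mathcal{K}(0,r_0)$. The following assertions are equivalent: (i) the multivalued mapping $x\mapsto[(\varphi\circ f)(x),+\infty)$ is $k$-metrically regular on $[0<f<r_0]\times(0,\varphi(r_0))$; (ii) for all $r_1,r_2\in(0,r_0)$, $\operatorname{Dist}([f=r_1],[f=r_2])\le k\,|\varphi(r_1)-\varphi(r_2)|$; (iii) for all $x\in[0<f<r_0]$, $|\nabla(\varphi\circ f)|(x)\ge\frac1k$.
   Context: $f$ is strongly slope-regular on a set $S$ if $|\nabla f|(x)=|\nabla(-f)|(x)$ for every $x\in S$, where the strong slope is $|\nabla g|(x)=\limsup_{y\to x}\frac{(g(x)-g(y))^+}{d(x,y)}$, $a^+=\max\{a,0\}$. $\mathcal{K}(0,r_0)$ is the set of $\varphi\in C([0,r_0))\cap C^1(0,r_0)$ with $\varphi(0)=0$ and $\varphi'>0$ on $(0,r_0)$; $\varphi(r_0):=\lim_{r\uparrow r_0}\varphi(r)$. $[f=r]=\{x:f(x)=r\}$, $[0<f<r_0]=\{x:0<f(x)<r_0\}$. $\operatorname{Dist}(S_1,S_2)=\max\{\sup_{x\in S_1}\operatorname{dist}(x,S_2),\sup_{x\in S_2}\operatorname{dist}(x,S_1)\}$ is the Hausdorff distance. A multivalued map $F:X\rightrightarrows Y$ is $k$-metrically regular at $(\bar x,\bar y)\in\operatorname{Graph}F$ if there exist $\varepsilon,\delta>0$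 with $\operatorname{dist}(x,F^{-1}(y))\le k\operatorname{dist}(y,F(x))$ for all $(x,y)\in B(\bar x,\varepsilon)\times B(\bar y,\delta)$; on $V$ if so at every point of $\operatorname{Graph}F\cap V$. *)

From Stdlib Require Import Reals.
From Coquelicot Require Import Coquelicot.
Open Scope R_scope.

Record MetricSpace := {
  mcarrier :> Type;
  mdist : mcarrier -> mcarrier -> R;
  mdist_eq0 : forall x y, mdist x y = 0 <-> x = y;
  mdist_sym : forall x y, mdist x y = mdist y x;
  mdist_tri : forall x y z, mdist x z <= mdist x y + mdist y z
}.

Arguments mdist {m}.

Definition complete_metric (X : MetricSpace) : Prop :=
  forall u : nat -> X,
    (forall eps, 0 < eps -> exists N, forall m n, (N <= m)%nat -> (N <= n)%nat ->
        mdist (u m) (u n) < eps) ->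
    exists l : X, forall eps, 0 < eps -> exists N, forall n, (N <= n)%nat ->
        mdist (u n) l < eps.

Definition mcontinuous {X : MetricSpace} (f : X -> R) : Prop :=
  forall x eps, 0 < eps -> exists delta, 0 < delta /\
    forall y, mdist x y < delta -> Rabs (f y - f x) < eps.

(* Strong slope |grad g|(x) = limsup_{y -> x} (g x - g y)^+ / d(x,y),
   as an extended real: inf over delta > 0 of the sup over
   0 < d(x,y) < delta of the quotient.  The value 0 is added to every
   sup-set (harmless since the quotients are >= 0); it gives the usual
   convention |grad g|(x) = 0 at isolated points. *)
Definition slope {X : MetricSpace} (g : X -> R) (x : X) : Rbar :=
  Rbar_glb (fun s => exists delta, 0 < delta /\
    s = Rbar_lub (fun q => q = Finite 0 \/
          exists y : X, 0 < mdist x y /\ mdist x y < delta /\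
            q = Finite (Rmax 0 (g x - g y) / mdist x y))).

Definition strongly_slope_regular {X : MetricSpace} (f : X -> R) (S : X -> Prop) : Prop :=
  forall x, S x -> slope f x = slope (fun z => - f z) x.

(* dist(x, S) = inf_{z in S} d(x,z)  (= +oo if S is empty). *)
Definition dist_set {X : MetricSpace} (x : X) (S : X -> Prop) : Rbar :=
  Rbar_glb (fun t => exists z, S z /\ t = Finite (mdist x z)).

(* Hausdorff distance Dist(S1,S2) = max(sup_{S1} dist(.,S2), sup_{S2} dist(.,S1)),
   written as the sup of the union of the two sets of values. *)
Definition hausdorff_dist {X : MetricSpace} (S1 S2 : X -> Prop) : Rbar :=
  Rbar_lub (fun t => (exists x, S1 x /\ t = dist_set x S2) \/
                     (exists x, S2 x /\ t = dist_set x S1)).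

Definition level {X : MetricSpace} (f : X -> R) (r : R) : X -> Prop :=
  fun x => f x = r.
Definition band {X : MetricSpace} (f : X -> R) (r0 : R) : X -> Prop :=
  fun x => 0 < f x /\ f x < r0.

(* phi in K(0,r0): phi in C([0,r0)) /\ C^1(0,r0), phi(0) = 0, phi' > 0 on (0,r0).
   phi is given as a function R -> R; only its values on [0,r0) matter. *)
Definition inK (phi : R -> R) (r0 : R) : Prop :=
  (forall r, 0 <= r < r0 -> forall eps, 0 < eps -> exists delta, 0 < delta /\
      forall s, 0 <= s < r0 -> Rabs (s - r) < delta -> Rabs (phi s - phi r) < eps)
  /\ (forall r, 0 < r < r0 ->
        ex_derive phi r /\ continuous (Derive phi) r /\ 0 < Derive phi r)
  /\ phi 0 = 0.

Definition dist_halfline (y a : R) : R := Rmax 0 (a - y).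

(* k-metric regularity of  F : [0<f<r0] ==> R,  x |-> [phi(f x), +oo),
   on V = [0<f<r0] x (0, L), L = phi(r0) in Rbar:
   at every (xb, yb) in Graph F with xb in [0<f<r0], 0 < yb < L, there are
   eps, delta > 0 such that dist(x, F^-1(y)) <= k dist(y, F(x)) for
   x in B(xb,eps) (in the domain of F) and y in B(yb,delta). *)
Definition metric_regular_level (X : MetricSpace) (f : X -> R) (phi : R -> R)
    (r0 : R) (L : Rbar) (k : R) : Prop :=
  forall (xb : X) (yb : R), band f r0 xb -> 0 < yb -> Rbar_lt (Finite yb) L ->
    phi (f xb) <= yb ->
    exists eps, 0 < eps /\ exists delta, 0 < delta /\
      forall (x : X) (y : R), band f r0 x -> mdist x xb < eps -> Rabs (y - yb) < delta ->
        Rbar_le (dist_set x (fun z => band f r0 z /\ phi (f z) <= y))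
                (Finite (k * dist_halfline y (phi (f x)))).

From Stdlib Require Import Reals Lra Lia Classical IndefiniteDescription.
From Coquelicot Require Import Coquelicot.
Open Scope R_scope.

(* (i) -> (iii): asking for the value [phi (f x) - t] forces a point of the lower
   sublevel set within about [k t] of [x], i.e. [phi o f] descends at rate nearly [1/k].
   (iii) -> (ii): starting on [f = r1], Ekeland's variational principle applied to
   [phi o f] (to move down) or to [-(phi o f)] (to move up) reaches [f = r2] within
   [(k + eps) |phi r1 - phi r2|]; the rate of ascent comes from strong slope regularity
   of [f] and the chain rule for [phi'(f x) > 0].
   (ii) -> (i): for a target [y < phi (f x)], the intermediate value theorem gives the
   level [r] with [phi r = y], and the Hausdorff bound between [f = f x] and [f = r]
   is exactly the regularity estimate. *)

Lemma Rbar_glb_le (E : Rbar -> Prop) x : E x -> Rbar_le (Rbar_glb E) x.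
Proof. intros Ex. unfold Rbar_glb. destruct (Rbar_ex_glb E) as [l Hl]; simpl. now apply (proj1 Hl). Qed.

Lemma Rbar_le_glb (E : Rbar -> Prop) l :
  (forall x, E x -> Rbar_le l x) -> Rbar_le l (Rbar_glb E).
Proof. intros H. unfold Rbar_glb. destruct (Rbar_ex_glb E) as [m Hm]; simpl. now apply (proj2 Hm). Qed.

Lemma Rbar_le_lub (E : Rbar -> Prop) x : E x -> Rbar_le x (Rbar_lub E).
Proof. intros Ex. unfold Rbar_lub. destruct (Rbar_ex_lub E) as [l Hl]; simpl. now apply (proj1 Hl). Qed.

Lemma Rbar_lub_le (E : Rbar -> Prop) l :
  (forall x, E x -> Rbar_le x l) -> Rbar_le (Rbar_lub E) l.
Proof. intros H. unfold Rbar_lub. destruct (Rbar_ex_lub E) as [m Hm]; simpl. now apply (proj2 Hm). Qed.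

Lemma Rbar_le_of_le_plus_eps (v : Rbar) (M : R) :
  (forall eps, 0 < eps -> Rbar_le v (M + eps)) -> Rbar_le v M.
Proof.
  intros H. destruct v as [v| |]; simpl; auto.
  - destruct (Rle_dec v M) as [h|h]; auto.
    specialize (H ((v - M) / 2)). simpl in H. lra.
  - apply (H 1). lra.
Qed.

Lemma Rbar_le_of_lt_le (a : R) (s : Rbar) : 0 < a ->
  (forall b, 0 < b < a -> Rbar_le b s) -> Rbar_le a s.
Proof.
  intros Ha H. destruct s as [s| |]; simpl; auto.
  - destruct (Rle_dec a s) as [h|h]; auto.
    destruct (Rlt_le_dec 0 s) as [h0|h0].
    + specialize (H ((s + a) / 2)). simpl in H. lra.
    + specialize (H (a / 2)). simpl in H. lra.
  - apply (H (a / 2)). lra.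
Qed.

Lemma Rbar_glb_lt_witness (E : Rbar -> Prop) (M eps : R) :
  Rbar_le (Rbar_glb E) M -> 0 < eps -> exists x, E x /\ Rbar_lt x (M + eps).
Proof.
  intros H He. apply NNPP. intros Hn.
  assert (Hge : Rbar_le (M + eps) (Rbar_glb E)).
  { apply Rbar_le_glb. intros x Ex. apply Rbar_not_lt_le. intros Hl. apply Hn. eauto. }
  pose proof (Rbar_le_trans _ _ _ Hge H) as Hc. simpl in Hc. lra.
Qed.

Lemma near_minimizer {T : Type} (P : T -> Prop) (h : T -> R) (c eps : R) :
  (exists v, P v) -> (forall v, P v -> c <= h v) -> 0 < eps ->
  exists w, P w /\ forall v, P v -> h w <= h v + eps.
Proof.
  intros [v0 Pv0] Hc He.
  set (E := fun t => exists v, P v /\ t = Finite (h v)).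
  assert (Hlow : Rbar_le c (Rbar_glb E)).
  { apply Rbar_le_glb. intros t [v [Pv ->]]. exact (Hc v Pv). }
  assert (Hup : Rbar_le (Rbar_glb E) (h v0)) by (apply Rbar_glb_le; now exists v0).
  assert (Hinf : forall v, P v -> Rbar_le (Rbar_glb E) (h v))
    by (intros v Pv; apply Rbar_glb_le; now exists v).
  destruct (Rbar_glb E) as [m| |] eqn:Hm; simpl in Hlow, Hup; try contradiction.
  destruct (Rbar_glb_lt_witness E m eps) as [t [[w [Pw ->]] Hw]];
    [now rewrite Hm; apply Rbar_le_refl|exact He|].
  exists w. split; [exact Pw|]. intros v Pv. specialize (Hinf v Pv). simpl in Hw, Hinf. lra.
Qed.

Section Metric.
Context {X : MetricSpace}.

Lemma mdist_self (x : X) : mdist x x = 0.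
Proof. now apply (mdist_eq0 X). Qed.

Lemma mdist_ge0 (x y : X) : 0 <= mdist x y.
Proof.
  pose proof (mdist_tri X x y x) as H. rewrite mdist_self, (mdist_sym X y x) in H. lra.
Qed.

Lemma dist_set_le (x : X) (S : X -> Prop) z : S z -> Rbar_le (dist_set x S) (mdist x z).
Proof. intros Sz. apply Rbar_glb_le. eauto. Qed.

Lemma dist_set_le_eps (x : X) (S : X -> Prop) (M : R) :
  (forall eps, 0 < eps -> exists z, S z /\ mdist x z <= M + eps) ->
  Rbar_le (dist_set x S) M.
Proof.
  intros H. apply Rbar_le_of_le_plus_eps. intros eps He.
  destruct (H eps He) as [z [Sz Hz]].
  eapply Rbar_le_trans; [apply (dist_set_le x S z Sz)|exact Hz].
Qed.

Lemma dist_set_lt_witness (x : X) (S : X -> Prop) (M eps : R) :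
  Rbar_le (dist_set x S) M -> 0 < eps -> exists z, S z /\ mdist x z < M + eps.
Proof.
  intros H He. destruct (Rbar_glb_lt_witness _ _ _ H He) as [t [[z [Sz ->]] Ht]]. eauto.
Qed.

Lemma dist_set_antimono (x : X) (S1 S2 : X -> Prop) :
  (forall z, S1 z -> S2 z) -> Rbar_le (dist_set x S2) (dist_set x S1).
Proof. intros H. apply Rbar_glb_subset. intros t [z [Sz ->]]. eauto. Qed.

Lemma mcontinuous_opp (g : X -> R) : mcontinuous g -> mcontinuous (fun v => - g v).
Proof.
  intros H x eps He. destruct (H x eps He) as [d [Hd Hy]]. exists d. split; [exact Hd|].
  intros y Hxy. rewrite <- Rabs_Ropp. replace (- (- g y - - g x)) with (g y - g x) by ring.
  auto.
Qed.

Lemma mcontinuous_near (g : X -> R) x eps : mcontinuous g -> 0 < eps ->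
  exists d, 0 < d /\ forall y, mdist x y < d -> g x - eps < g y < g x + eps.
Proof.
  intros Hg He. destruct (Hg x eps He) as [d [Hd H]]. exists d. split; [exact Hd|].
  intros y Hy. specialize (H y Hy). apply Rabs_lt_between in H. lra.
Qed.

Definition descends (g : X -> R) (x : X) (b delta : R) : Prop :=
  exists y, 0 < mdist x y /\ mdist x y < delta /\ b * mdist x y < g x - g y.

Lemma slope_ge_iff (g : X -> R) x a : 0 < a ->
  Rbar_le a (slope g x) <->
  (forall delta b, 0 < delta -> 0 < b < a -> descends g x b delta).
Proof.
  intros Ha. split.
  - intros H delta b Hd Hb. apply NNPP. intros Hn.
    assert (Hle : Rbar_le (slope g x) b).
    { unfold slope. eapply Rbar_le_trans.
      { apply Rbar_glb_le. exists delta. split; [exact Hd|reflexivity]. }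
      apply Rbar_lub_le. intros q [->|[y [Hy1 [Hy2 ->]]]]; simpl; [lra|].
      assert (Hq : g x - g y <= b * mdist x y).
      { apply Rnot_lt_le. intros Hl. apply Hn. exists y. auto. }
      apply Rmult_le_reg_r with (mdist x y); [exact Hy1|].
      unfold Rdiv. rewrite Rmult_assoc, Rinv_l, Rmult_1_r by lra.
      apply Rmax_lub; nra. }
    pose proof (Rbar_le_trans _ _ _ H Hle) as Hc. simpl in Hc. lra.
  - intros H. unfold slope. apply Rbar_le_glb. intros s [delta [Hd ->]].
    apply Rbar_le_of_lt_le; [exact Ha|]. intros b Hb.
    destruct (H delta b Hd Hb) as [y [Hy1 [Hy2 Hy3]]].
    eapply Rbar_le_trans; [|apply Rbar_le_lub; right; exists y; eauto].
    simpl. rewrite Rmax_right by nra.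
    apply Rmult_le_reg_r with (mdist x y); [exact Hy1|].
    unfold Rdiv. rewrite Rmult_assoc, Rinv_l; lra.
Qed.

End Metric.

Lemma inv_succ_lt (eps : R) : 0 < eps -> exists N, forall n, (N <= n)%nat -> / INR (S n) < eps.
Proof.
  intros He. destruct (nfloor_ex (/ eps)) as [N [_ HN]].
  { left. now apply Rinv_0_lt_compat. }
  exists N. intros n Hn. rewrite S_INR.
  assert (INR N <= INR n) by (apply le_INR; lia).
  assert (0 < INR n + 1) by (pose proof (pos_INR n); lra).
  rewrite <- (Rinv_inv eps). apply Rinv_lt_contravar.
  - apply Rmult_lt_0_compat; [apply Rinv_0_lt_compat; lra|lra].
  - lra.
Qed.

Section Ekeland.
Context {X : MetricSpace}.

Definition converges (u : nat -> X) (z : X) : Prop :=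
  forall eps, 0 < eps -> exists N, forall n, (N <= n)%nat -> mdist (u n) z < eps.

Lemma limit_sublevel (g : X -> R) (b : R) (a : X) (C : R) (u : nat -> X) (z : X) (N : nat) :
  mcontinuous g -> 0 <= b -> converges u z ->
  (forall n, (N <= n)%nat -> g (u n) + b * mdist a (u n) <= C) ->
  g z + b * mdist a z <= C.
Proof.
  intros Hg Hb Hu H. apply Rnot_lt_le. intros Hl.
  set (eps := (g z + b * mdist a z - C) / 2).
  assert (He : 0 < eps) by (unfold eps; lra).
  destruct (mcontinuous_near g z eps Hg He) as [d [Hd Hnear]].
  assert (Hm : 0 < Rmin d (eps / (b + 1))).
  { apply Rmin_glb_lt; [exact Hd|]. apply Rdiv_lt_0_compat; lra. }
  destruct (Hu _ Hm) as [N1 HN1].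
  set (v := u (Nat.max N N1)).
  specialize (HN1 (Nat.max N N1) ltac:(lia)). specialize (H (Nat.max N N1) ltac:(lia)).
  fold v in HN1, H.
  assert (Hvz : mdist z v < d)
    by (rewrite (mdist_sym X); eapply Rlt_le_trans; [exact HN1|apply Rmin_l]).
  assert (Hbv : b * mdist v z <= eps).
  { assert (mdist v z <= eps / (b + 1))
      by (left; eapply Rlt_le_trans; [exact HN1|apply Rmin_r]).
    apply Rle_trans with ((b + 1) * (eps / (b + 1))); [pose proof (mdist_ge0 v z); nra|].
    right. field. lra. }
  specialize (Hnear v Hvz). pose proof (mdist_tri X a v z). unfold eps in *. nra.
Qed.

Variables (g : X -> R) (c b : R).

(* Ekeland's partial order, restricted to the closed set [c <= g]. *)
Definition ekeland_dominated (y w : X) : Prop := c <= g w /\ g w + b * mdist y w <= g y.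

Lemma ekeland_dominated_refl y : c <= g y -> ekeland_dominated y y.
Proof. intros Hy. split; [exact Hy|]. rewrite mdist_self. lra. Qed.

Lemma ekeland_dominated_trans y w v : 0 <= b ->
  ekeland_dominated y w -> ekeland_dominated w v -> ekeland_dominated y v.
Proof.
  intros Hb [_ H1] [Hv H2]. split; [exact Hv|]. pose proof (mdist_tri X y w v). nra.
Qed.

Lemma ekeland_sequence x0 : c <= g x0 ->
  exists u : nat -> X, u 0%nat = x0 /\ forall n,
    ekeland_dominated (u n) (u (S n)) /\
    forall v, ekeland_dominated (u n) v -> g (u (S n)) <= g v + / INR (S n).
Proof.
  intros Hx0.
  assert (next : forall y n, {w | c <= g y -> ekeland_dominated y w /\
      forall v, ekeland_dominated y v -> g w <= g v + / INR (S n)}).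
  { intros y n. apply constructive_indefinite_description.
    destruct (classic (c <= g y)) as [Hy|Hy]; [|exists y; tauto].
    destruct (near_minimizer (ekeland_dominated y) g c (/ INR (S n))) as [w Hw].
    - exists y. now apply ekeland_dominated_refl.
    - now intros v [Hv _].
    - apply Rinv_0_lt_compat, lt_0_INR. lia.
    - exists w. now intros _. }
  set (u := fix u (n : nat) : X := match n with O => x0 | S m => proj1_sig (next (u m) m) end).
  assert (Hu : forall n, c <= g (u n) /\ ekeland_dominated (u n) (u (S n)) /\
      forall v, ekeland_dominated (u n) v -> g (u (S n)) <= g v + / INR (S n)).
  { induction n as [|n IH].
    - simpl. destruct (next x0 0%nat) as [w Hw]. simpl. auto.
    - change (u (S (S n))) with (proj1_sig (next (u (S n)) (S n))).
      destruct (next (u (S n)) (S n)) as [w Hw]. simpl proj1_sig.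
      destruct IH as [_ [[Hn _] _]]. auto. }
  exists u. split; [reflexivity|]. intros n. apply Hu.
Qed.

Lemma ekeland_nested (u : nat -> X) : 0 < b -> c <= g (u 0%nat) ->
  (forall n, ekeland_dominated (u n) (u (S n)) /\
     forall v, ekeland_dominated (u n) v -> g (u (S n)) <= g v + / INR (S n)) ->
  (forall n m, (n <= m)%nat -> ekeland_dominated (u n) (u m)) /\
  (forall n v w, ekeland_dominated (u (S n)) v -> ekeland_dominated (u (S n)) w ->
     b * mdist v w <= 2 * / INR (S n)).
Proof.
  intros Hb Hu0 Hu. split.
  - intros n m Hnm. induction Hnm as [|m Hnm IH].
    + apply ekeland_dominated_refl. destruct n; [exact Hu0|apply (Hu n)].
    + eapply ekeland_dominated_trans; [lra|exact IH|apply Hu].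
  - assert (Hdiam : forall n v, ekeland_dominated (u (S n)) v ->
        b * mdist (u (S n)) v <= / INR (S n)).
    { intros n v Hv. destruct (Hu n) as [Hn Hmin].
      specialize (Hmin v (ekeland_dominated_trans _ _ _ ltac:(lra) Hn Hv)).
      destruct Hv. lra. }
    intros n v w Hv Hw. pose proof (Hdiam n v Hv). pose proof (Hdiam n w Hw).
    pose proof (mdist_tri X v (u (S n)) w) as Htri.
    rewrite (mdist_sym X v (u (S n))) in Htri. nra.
Qed.

Hypothesis Hcomp : complete_metric X.

Lemma ekeland_principle x0 : mcontinuous g -> 0 < b -> c <= g x0 ->
  exists z, ekeland_dominated x0 z /\ forall w, ekeland_dominated z w -> w = z.
Proof.
  intros Hg Hb Hx0.
  destruct (ekeland_sequence x0 Hx0) as [u [Hu0 Hu]].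
  destruct (ekeland_nested u Hb ltac:(now rewrite Hu0) Hu) as [Hmono Hclose].
  assert (Hcauchy : forall eps, 0 < eps -> exists N, forall m n, (N <= m)%nat -> (N <= n)%nat ->
      mdist (u m) (u n) < eps).
  { intros eps He. destruct (inv_succ_lt (eps * b / 2)) as [N HN]; [nra|].
    exists (S N). intros m n Hm Hn.
    pose proof (Hclose N (u m) (u n) (Hmono _ _ Hm) (Hmono _ _ Hn)).
    specialize (HN N (le_n N)).
    apply Rmult_lt_reg_l with b; [exact Hb|]. lra. }
  destruct (Hcomp u Hcauchy) as [z Hz].
  assert (Hdom : forall n, ekeland_dominated (u n) z).
  { intros n. split.
    - assert (Hlim : - g z + 0 * mdist x0 z <= - c).
      { apply (limit_sublevel (fun v => - g v) 0 x0 (- c) u z 0);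
          auto using mcontinuous_opp; try lra.
        intros m _. destruct (Hmono m m (le_n m)) as [Hm _]. lra. }
      lra.
    - apply (limit_sublevel g b (u n) (g (u n)) u z n); auto; try lra.
      intros m Hm. now destruct (Hmono n m Hm). }
  exists z. split; [rewrite <- Hu0; apply Hdom|].
  intros w Hw. apply (mdist_eq0 X). apply Rle_antisym; [|apply mdist_ge0].
  apply Rnot_lt_le. intros Hpos.
  destruct (inv_succ_lt (mdist w z * b / 4)) as [N HN]; [nra|].
  specialize (HN N (le_n N)).
  pose proof (Hclose N w z (ekeland_dominated_trans _ _ _ ltac:(lra) (Hdom (S N)) Hw) (Hdom (S N))).
  nra.
Qed.

Lemma ekeland_level x0 : mcontinuous g -> 0 < b -> c <= g x0 ->
  (forall z, c < g z -> g z <= g x0 -> forall delta, 0 < delta -> descends g z b delta) ->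
  exists z, g z = c /\ b * mdist x0 z <= g x0 - c.
Proof.
  intros Hg Hb Hx0 Hdesc.
  destruct (ekeland_principle x0 Hg Hb Hx0) as [z [[Hcz Hz] Hmin]].
  exists z. enough (Hgz : g z = c) by (rewrite <- Hgz; lra).
  destruct Hcz as [Hlt|Heq]; [exfalso|auto].
  destruct (mcontinuous_near g z (g z - c) Hg ltac:(lra)) as [d [Hd Hnear]].
  destruct (Hdesc z Hlt ltac:(pose proof (mdist_ge0 x0 z); nra) d Hd) as [y [Hy1 [Hy2 Hy3]]].
  specialize (Hnear y Hy2).
  assert (y = z) as -> by (apply Hmin; split; lra).
  rewrite mdist_self in Hy1. lra.
Qed.

End Ekeland.

(* Clamping [f] into a closed subinterval of [(0, r0)] makes [phi o f] defined and
   continuous on all of [X], as Ekeland's principle requires. *)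
Definition clamp (lo hi t : R) : R := Rmin hi (Rmax lo t).

Lemma clamp_lipschitz lo hi s t : lo <= hi -> Rabs (clamp lo hi s - clamp lo hi t) <= Rabs (s - t).
Proof.
  intros H. unfold clamp, Rmin, Rmax.
  repeat destruct Rle_dec; unfold Rabs; repeat destruct Rcase_abs; lra.
Qed.

Lemma clamp_range lo hi t : lo <= hi -> lo <= clamp lo hi t <= hi.
Proof. intros H. unfold clamp, Rmin, Rmax. repeat destruct Rle_dec; lra. Qed.

Lemma clamp_id lo hi t : lo <= t <= hi -> clamp lo hi t = t.
Proof. intros H. unfold clamp, Rmin, Rmax. repeat destruct Rle_dec; lra. Qed.

Lemma clamp_interior lo hi t : lo < clamp lo hi t < hi -> clamp lo hi t = t.
Proof. unfold clamp, Rmin, Rmax. repeat destruct Rle_dec; lra. Qed.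

Lemma rate_slack (k D eps : R) : 0 < k -> 0 <= D -> 0 < eps ->
  exists b, 0 < b < 1 / k /\ forall d, b * d <= D -> d <= k * D + eps.
Proof.
  intros Hk HD He.
  assert (Hs : 0 < eps / (D + 1)) by (apply Rdiv_lt_0_compat; lra).
  set (K := k + eps / (D + 1)).
  exists (1 / K). split.
  - split; [apply Rdiv_lt_0_compat; unfold K; lra|].
    unfold Rdiv. rewrite !Rmult_1_l. apply Rinv_lt_contravar; unfold K; nra.
  - intros d Hd.
    assert (Hdk : d <= D * K).
    { replace d with ((1 / K * d) * K) by (field; unfold K; lra).
      apply Rmult_le_compat_r; [unfold K; lra|exact Hd]. }
    assert (D * (eps / (D + 1)) <= eps).
    { apply Rmult_le_reg_r with (D + 1); [lra|].
      replace (D * (eps / (D + 1)) * (D + 1)) with (D * eps) by (field; lra). nra. }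
    unfold K in Hdk. nra.
Qed.

Section Reparametrization.
Variables (phi : R -> R) (r0 : R).
Hypothesis HK : inK phi r0.

Lemma phi_mvt s t : 0 < s < t -> t < r0 ->
  exists c, s <= c <= t /\ phi t - phi s = Derive phi c * (t - s).
Proof.
  intros Hs Ht. destruct HK as [_ [HD _]].
  destruct (MVT_gen phi s t (Derive phi)) as [c [Hc Heq]];
    rewrite ?Rmin_left, ?Rmax_right in * by lra.
  - intros x Hx. apply Derive_correct, HD. lra.
  - intros x Hx. apply continuity_pt_filterlim.
    apply (ex_derive_continuous (K := R_AbsRing) (V := R_NormedModule)), HD. lra.
  - eauto.
Qed.

Lemma phi_lt_pos s t : 0 < s < t -> t < r0 -> phi s < phi t.
Proof.
  intros Hs Ht. destruct (phi_mvt s t Hs Ht) as [c [Hc Heq]].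
  destruct HK as [_ [HD _]]. destruct (HD c ltac:(lra)) as [_ [_ Hp]]. nra.
Qed.

Lemma phi_lt s t : 0 <= s < t -> t < r0 -> phi s < phi t.
Proof.
  intros Hs Ht. destruct (Rle_lt_or_eq_dec 0 s (proj1 Hs)) as [Hs0|<-]; [now apply phi_lt_pos|].
  apply Rle_lt_trans with (phi (t / 2)); [|apply phi_lt_pos; lra].
  (* [phi 0 <= phi u] for small [u > 0] by continuity at [0], and [phi] increases on [(0, r0)]. *)
  apply Rnot_lt_le. intros Hl.
  destruct HK as [Hcont _].
  destruct (Hcont 0 ltac:(lra) (phi 0 - phi (t / 2)) ltac:(lra)) as [d [Hd Hc]].
  set (u := Rmin (d / 2) (t / 4)).
  assert (0 < u) by (apply Rmin_glb_lt; lra).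
  assert (u <= d / 2) by apply Rmin_l. assert (u <= t / 4) by apply Rmin_r.
  specialize (Hc u ltac:(lra) ltac:(rewrite Rminus_0_r, Rabs_right; lra)).
  pose proof (phi_lt_pos u (t / 2) ltac:(lra) ltac:(lra)).
  apply Rabs_lt_between in Hc. lra.
Qed.

Lemma phi_le_iff s t : 0 <= s < r0 -> 0 <= t < r0 -> phi s <= phi t <-> s <= t.
Proof.
  intros Hs Ht. split; intros H.
  - apply Rnot_lt_le. intros Hl. pose proof (phi_lt t s ltac:(lra) ltac:(lra)). lra.
  - destruct H as [H|<-]; [left; apply phi_lt; lra|lra].
Qed.

Lemma phi_pos r : 0 < r < r0 -> 0 < phi r.
Proof. intros H. destruct HK as [_ [_ <-]]. apply phi_lt; lra. Qed.

Lemma phi_derive_pos r : 0 < r < r0 -> 0 < Derive phi r.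
Proof. intros H. destruct HK as [_ [HD _]]. now apply HD. Qed.

Lemma phi_difference_quotient r eta : 0 < r < r0 -> 0 < eta ->
  exists rho, 0 < rho /\ 0 < r - rho /\ r + rho < r0 /\ forall s t, Rabs (s - r) < rho -> Rabs (t - r) < rho -> t < s ->
    (Derive phi r - eta) * (s - t) <= phi s - phi t <= (Derive phi r + eta) * (s - t).
Proof.
  intros Hr He. destruct HK as [_ [HD _]]. destruct (HD r Hr) as [_ [Hc _]].
  apply (filterlim_locally (Derive phi) (Derive phi r)) with (eps := mkposreal eta He) in Hc.
  destruct Hc as [d Hd].
  set (rho := Rmin d (Rmin (r / 2) ((r0 - r) / 2))).
  assert (h1 : rho <= d) by apply Rmin_l.
  assert (h2 : rho <= r / 2) by (eapply Rle_trans; [apply Rmin_r|apply Rmin_l]).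
  assert (h3 : rho <= (r0 - r) / 2) by (eapply Rle_trans; [apply Rmin_r|apply Rmin_r]).
  assert (h0 : 0 < rho) by (apply Rmin_glb_lt; [apply cond_pos|apply Rmin_glb_lt; lra]).
  exists rho. split; [exact h0|]. split; [lra|]. split; [lra|].
  intros s t Hs Ht Hts. apply Rabs_lt_between in Hs. apply Rabs_lt_between in Ht.
  destruct (phi_mvt t s ltac:(lra) ltac:(lra)) as [c [Hc' Heq]].
  assert (Hcd : Rabs (c - r) < d) by (apply Rabs_lt_between; lra).
  specialize (Hd c Hcd). change (Rabs (Derive phi c - Derive phi r) < eta) in Hd.
  apply Rabs_lt_between in Hd. rewrite Heq. split; nra.
Qed.

Lemma phi_clamp_continuous lo hi t eps : 0 <= lo <= hi -> hi < r0 -> 0 < eps ->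
  exists delta, 0 < delta /\
    forall t', Rabs (t' - t) < delta -> Rabs (phi (clamp lo hi t') - phi (clamp lo hi t)) < eps.
Proof.
  intros Hl Hh He. pose proof (clamp_range lo hi t ltac:(lra)).
  destruct HK as [Hcont _].
  destruct (Hcont (clamp lo hi t) ltac:(lra) eps He) as [d [Hd Hc]].
  exists d. split; [exact Hd|]. intros t' Ht'. pose proof (clamp_range lo hi t' ltac:(lra)).
  apply Hc; [lra|]. eapply Rle_lt_trans; [apply clamp_lipschitz; lra|exact Ht'].
Qed.

Lemma phi_ivt a y : 0 < a < r0 -> 0 < y < phi a -> exists r, 0 < r <= a /\ phi r = y.
Proof.
  intros Ha Hy. destruct HK as [_ [_ H0]].
  assert (Hc : continuity (fun t => phi (clamp 0 a t))).
  { intros t eps He. destruct (phi_clamp_continuous 0 a t eps ltac:(lra) ltac:(lra) He)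
      as [d [Hd H]].
    exists d. split; [exact Hd|]. intros t' [_ Ht']. now apply H. }
  destruct (IVT_gen _ 0 a y Hc) as [r [Hr Hphi]].
  - rewrite (clamp_id 0 a 0), (clamp_id 0 a a), Rmin_left, Rmax_right; lra.
  - rewrite Rmin_left, Rmax_right in Hr by lra. rewrite clamp_id in Hphi by lra.
    exists r. split; [|exact Hphi]. split; [|lra].
    destruct (proj1 Hr) as [h|<-]; [exact h|lra].
Qed.

Lemma phi_lt_limit L r : filterlim phi (at_left r0) (Rbar_locally L) -> 0 <= r < r0 ->
  Rbar_lt (phi r) L.
Proof.
  intros HL Hr. apply Rbar_not_le_lt. intros Hle.
  set (s := (r + r0) / 2).
  assert (Hs : phi r < phi s) by (apply phi_lt; unfold s; lra).
  destruct (HL _ (open_Rbar_lt' L (phi s) (Rbar_le_lt_trans L (phi r) (phi s) Hle Hs))) as [d Hd].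
  set (t := Rmax s (r0 - d / 2)).
  assert (s <= t) by apply Rmax_l. assert (r0 - d / 2 <= t) by apply Rmax_r.
  pose proof (cond_pos d).
  assert (Ht : t < r0) by (unfold t, Rmax; destruct Rle_dec; unfold s in *; lra).
  assert (Hball : Rabs (t - r0) < d) by (apply Rabs_lt_between; lra).
  specialize (Hd t Hball Ht). simpl in Hd.
  assert (phi s <= phi t) by (apply phi_le_iff; unfold s in *; lra). lra.
Qed.

End Reparametrization.

Section SlopeOfReparametrization.
Variables (X : MetricSpace) (f : X -> R) (phi : R -> R) (r0 : R).
Hypotheses (Hf : mcontinuous f) (HK : inK phi r0).

Lemma slope_ge_of_comp x a : 0 < f x < r0 -> 0 < a ->
  Rbar_le a (slope (fun z => phi (f z)) x) ->
  Rbar_le (a / Derive phi (f x)) (slope f x).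
Proof.
  intros Hx Ha H. set (p := Derive phi (f x)).
  assert (Hp : 0 < p) by now apply (phi_derive_pos phi r0).
  apply slope_ge_iff; [apply Rdiv_lt_0_compat; lra|]. intros delta c Hd Hc.
  assert (Hcp : c * p < a) by (apply (Rmult_lt_reg_r (/ p)); [apply Rinv_0_lt_compat; lra|];
    replace (c * p * / p) with c by (field; lra); apply Hc).
  set (eta := (a - c * p) / (2 * c)).
  assert (Heta : 0 < eta) by (unfold eta; apply Rdiv_lt_0_compat; nra).
  set (b := c * (p + eta)).
  assert (Hb : b = (c * p + a) / 2) by (unfold b, eta; field; lra).
  assert (Hb0 : 0 < b) by (rewrite Hb; nra).
  destruct (phi_difference_quotient phi r0 HK (f x) eta Hx Heta) as [rho [Hrho [Hlo_rho [Hhi_rho Hdq]]]].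
  destruct (mcontinuous_near f x rho Hf Hrho) as [df [Hdf Hnear]].
  destruct (proj1 (slope_ge_iff _ x a Ha) H (Rmin delta df) b
    ltac:(apply Rmin_glb_lt; lra) ltac:(nra)) as [y [Hy1 [Hy2 Hy3]]].
  assert (Hyd : mdist x y < delta) by (eapply Rlt_le_trans; [exact Hy2|apply Rmin_l]).
  specialize (Hnear y ltac:(eapply Rlt_le_trans; [exact Hy2|apply Rmin_r])).
  assert (Hlt : f y < f x).
  { apply Rnot_le_lt. intros Hle.
    assert (phi (f x) <= phi (f y)) by (apply (phi_le_iff phi r0 HK); lra).
    pose proof (Rmult_lt_0_compat b _ Hb0 Hy1). lra. }
  destruct (Hdq (f x) (f y) ltac:(rewrite Rminus_diag, Rabs_R0; lra)
    ltac:(apply Rabs_lt_between; lra) Hlt) as [_ Hup].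
  exists y. split; [exact Hy1|]. split; [exact Hyd|].
  apply (Rmult_lt_reg_l (p + eta)); [lra|]. fold p in Hup. unfold b in Hy3. nra.
Qed.

Lemma slope_opp_comp_ge x a : 0 < f x < r0 -> 0 < a ->
  Rbar_le a (slope (fun z => - f z) x) ->
  Rbar_le (a * Derive phi (f x)) (slope (fun z => - phi (f z)) x).
Proof.
  intros Hx Ha H. set (p := Derive phi (f x)).
  assert (Hp : 0 < p) by now apply (phi_derive_pos phi r0).
  apply slope_ge_iff; [nra|]. intros delta b Hd Hb.
  set (c := (b / p + a) / 2).
  assert (Hbp : b / p < a) by (apply (Rmult_lt_reg_r p); [lra|];
    replace (b / p * p) with b by (field; lra); lra).
  assert (Hc0 : 0 < c) by (unfold c; assert (0 < b / p) by (apply Rdiv_lt_0_compat; lra); lra).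
  assert (Hca : c < a) by (unfold c; lra).
  set (q := b / c).
  assert (Hq : q * c = b) by (unfold q; field; lra).
  assert (Hqp : q < p).
  { apply (Rmult_lt_reg_r c); [lra|]. rewrite Hq. unfold c.
    replace b with (b / p * p) at 1 by (field; lra). nra. }
  destruct (phi_difference_quotient phi r0 HK (f x) (p - q) Hx ltac:(lra)) as [rho [Hrho [Hlo_rho [Hhi_rho Hdq]]]].
  destruct (mcontinuous_near f x rho Hf Hrho) as [df [Hdf Hnear]].
  destruct (proj1 (slope_ge_iff _ x a Ha) H (Rmin delta df) c
    ltac:(apply Rmin_glb_lt; lra) ltac:(lra)) as [y [Hy1 [Hy2 Hy3]]].
  assert (Hyd : mdist x y < delta) by (eapply Rlt_le_trans; [exact Hy2|apply Rmin_l]).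
  specialize (Hnear y ltac:(eapply Rlt_le_trans; [exact Hy2|apply Rmin_r])).
  assert (Hq0 : 0 < q) by (unfold q; apply Rdiv_lt_0_compat; lra).
  destruct (Hdq (f y) (f x) ltac:(apply Rabs_lt_between; lra)
    ltac:(rewrite Rminus_diag, Rabs_R0; lra) ltac:(nra)) as [Hlo _].
  exists y. split; [exact Hy1|]. split; [exact Hyd|].
  fold p in Hlo. replace (p - (p - q)) with q in Hlo by ring. nra.
Qed.

End SlopeOfReparametrization.

Section LevelSets.
Variables (X : MetricSpace) (f : X -> R) (r0 k : R) (phi : R -> R).
Hypotheses (Hf : mcontinuous f) (Hk : 0 < k) (HK : inK phi r0).

Lemma slope_comp_ge_of_metric_regular (L : Rbar) :
  filterlim phi (at_left r0) (Rbar_locally L) ->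
  metric_regular_level X f phi r0 L k ->
  forall x, band f r0 x -> Rbar_le (1 / k) (slope (fun z => phi (f z)) x).
Proof.
  intros HL Hreg x Hx. apply slope_ge_iff; [apply Rdiv_lt_0_compat; lra|].
  intros delta b Hd Hb. destruct Hx as [Hx1 Hx2].
  assert (Hy0 : 0 < phi (f x)) by (apply (phi_pos phi r0); auto).
  assert (HyL : Rbar_lt (phi (f x)) L) by (apply (phi_lt_limit phi r0); auto; lra).
  destruct (Hreg x (phi (f x)) (conj Hx1 Hx2) Hy0 HyL (Rle_refl _))
    as [eps [He [dl [Hdl Hx]]]].
  (* Lower the value by [t]: then some [z] with [phi (f z) <= phi (f x) - t] lies
     within [k t < t / b] of [x]. *)
  set (t := Rmin dl (b * delta) / 2).
  assert (ht1 : Rmin dl (b * delta) <= dl) by apply Rmin_l.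
  assert (ht2 : Rmin dl (b * delta) <= b * delta) by apply Rmin_r.
  assert (ht0 : 0 < Rmin dl (b * delta)) by (apply Rmin_glb_lt; nra).
  specialize (Hx x (phi (f x) - t) (conj Hx1 Hx2) ltac:(rewrite mdist_self; lra)
    ltac:(unfold t; rewrite Rabs_left; lra)).
  unfold dist_halfline in Hx. rewrite Rmax_right in Hx by (unfold t; lra).
  replace (phi (f x) - (phi (f x) - t)) with t in Hx by ring.
  assert (Hbk : b * k < 1)
    by (apply (Rmult_lt_reg_r (/ k)); [apply Rinv_0_lt_compat; lra|];
        replace (b * k * / k) with b by (field; lra); lra).
  assert (Hslack : 0 < t / b - k * t).
  { replace (t / b - k * t) with (t / b * (1 - b * k)) by (field; lra).
    apply Rmult_lt_0_compat; [apply Rdiv_lt_0_compat|]; unfold t in *; lra. }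
  destruct (dist_set_lt_witness x _ _ _ Hx Hslack) as [z [[Hz1 Hz2] Hz3]].
  replace (k * t + (t / b - k * t)) with (t / b) in Hz3 by ring.
  assert (Hbz : b * mdist x z < t).
  { apply (Rmult_lt_compat_l b) in Hz3; [|lra].
    replace (b * (t / b)) with t in Hz3 by (field; lra). exact Hz3. }
  exists z. split; [|split; [|lra]].
  - destruct (mdist_ge0 x z) as [h|h]; [exact h|].
    symmetry in h. apply (mdist_eq0 X) in h. subst z. unfold t in Hz2. lra.
  - apply Rlt_le_trans with (t / b); [exact Hz3|].
    apply (Rmult_le_reg_l b); [lra|]. replace (b * (t / b)) with t by (field; lra).
    unfold t. lra.
Qed.

Lemma metric_regular_of_hausdorff_level_le :
  (forall r1 r2, 0 < r1 < r0 -> 0 < r2 < r0 ->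
     Rbar_le (hausdorff_dist (level f r1) (level f r2)) (k * Rabs (phi r1 - phi r2))) ->
  forall L, metric_regular_level X f phi r0 L k.
Proof.
  intros Hdist L xb yb Hxb Hyb HyL Hg. exists 1. split; [lra|]. exists yb. split; [exact Hyb|].
  intros x y Hx _ Hy. apply Rabs_lt_between in Hy. unfold dist_halfline.
  destruct (Rle_dec (phi (f x)) y) as [h|h].
  - rewrite Rmax_left by lra. eapply Rbar_le_trans.
    + apply (dist_set_le x _ x). now split.
    + rewrite mdist_self. simpl. lra.
  - destruct Hx as [Hx1 Hx2].
    destruct (phi_ivt phi r0 HK (f x) y ltac:(lra) ltac:(lra)) as [r [Hr Hphi]].
    rewrite Rmax_right by lra.
    eapply Rbar_le_trans.
    { apply (dist_set_antimono x (level f r)).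
      intros z Hz. unfold level in Hz. split; [unfold band; lra|]. rewrite Hz. lra. }
    apply Rbar_le_trans with (hausdorff_dist (level f (f x)) (level f r)).
    { apply Rbar_le_lub. left. exists x. now split. }
    eapply Rbar_le_trans; [apply (Hdist (f x) r); lra|].
    simpl. rewrite Hphi, Rabs_right by lra. lra.
Qed.

Section SlopeBound.
Hypotheses (Hcomp : complete_metric X) (Hreg : strongly_slope_regular f (band f r0)).
Hypothesis Hslope : forall x, band f r0 x -> Rbar_le (1 / k) (slope (fun z => phi (f z)) x).

Lemma comp_descends x delta b : band f r0 x -> 0 < delta -> 0 < b < 1 / k ->
  descends (fun z => phi (f z)) x b delta.
Proof.
  intros Hx Hd Hb. revert delta b Hd Hb.
  apply slope_ge_iff; [apply Rdiv_lt_0_compat; lra|now apply Hslope].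
Qed.

(* Slope regularity of [f] is what turns the descent of [phi o f] into ascent. *)
Lemma comp_ascends x delta b : band f r0 x -> 0 < delta -> 0 < b < 1 / k ->
  descends (fun z => - phi (f z)) x b delta.
Proof.
  intros Hx Hd Hb. pose proof (phi_derive_pos phi r0 HK (f x) Hx) as Hp.
  assert (Hk1 : 0 < 1 / k) by (apply Rdiv_lt_0_compat; lra).
  assert (Hopp : Rbar_le (1 / k / Derive phi (f x)) (slope (fun z => - f z) x)).
  { rewrite <- (Hreg x Hx). apply (slope_ge_of_comp X f phi r0 Hf HK); auto. }
  apply (slope_opp_comp_ge X f phi r0 Hf HK x) in Hopp;
    [|exact Hx|apply Rdiv_lt_0_compat; lra].
  replace (1 / k / Derive phi (f x) * Derive phi (f x)) with (1 / k) in Hopp by (field; lra).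
  revert delta b Hd Hb. now apply slope_ge_iff.
Qed.

Lemma clamp_pinned lo hi r1 r2 t : 0 <= lo < r1 -> r1 <= r2 -> r2 < hi < r0 ->
  phi r1 <= phi (clamp lo hi t) <= phi r2 -> clamp lo hi t = t /\ r1 <= t <= r2.
Proof.
  intros Hlo H12 Hhi [H1 H2]. pose proof (clamp_range lo hi t ltac:(lra)) as Hc.
  apply (phi_le_iff phi r0 HK r1 (clamp lo hi t)) in H1; [|lra|lra].
  apply (phi_le_iff phi r0 HK (clamp lo hi t) r2) in H2; [|lra|lra].
  assert (Hid : clamp lo hi t = t) by (apply clamp_interior; lra).
  rewrite Hid in *. auto.
Qed.

Lemma descends_clamp (h : R -> R) z b lo hi : lo < f z < hi ->
  (forall delta, 0 < delta -> descends (fun v => h (f v)) z b delta) ->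
  forall delta, 0 < delta -> descends (fun v => h (clamp lo hi (f v))) z b delta.
Proof.
  intros Hz Hdesc delta Hd.
  destruct (mcontinuous_near f z (Rmin (f z - lo) (hi - f z)) Hf) as [df [Hdf Hnear]].
  { apply Rmin_glb_lt; lra. }
  destruct (Hdesc (Rmin delta df) ltac:(apply Rmin_glb_lt; lra)) as [y [Hy1 [Hy2 Hy3]]].
  assert (Rmin (f z - lo) (hi - f z) <= f z - lo) by apply Rmin_l.
  assert (Rmin (f z - lo) (hi - f z) <= hi - f z) by apply Rmin_r.
  specialize (Hnear y ltac:(eapply Rlt_le_trans; [exact Hy2|apply Rmin_r])).
  exists y. split; [exact Hy1|]. split; [eapply Rlt_le_trans; [exact Hy2|apply Rmin_l]|].
  rewrite !clamp_id by lra. exact Hy3.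
Qed.

Lemma mcontinuous_phi_clamp lo hi : 0 <= lo <= hi -> hi < r0 ->
  mcontinuous (fun v => phi (clamp lo hi (f v))).
Proof.
  intros Hl Hh v eps He.
  destruct (phi_clamp_continuous phi r0 HK lo hi (f v) eps Hl Hh He) as [d1 [Hd1 H1]].
  destruct (Hf v d1 Hd1) as [d [Hd H2]]. exists d. split; [exact Hd|]. auto.
Qed.

Lemma reach_lower_level x rl rh eps : 0 < rl < rh -> rh < r0 -> f x = rh -> 0 < eps ->
  exists z, f z = rl /\ mdist x z <= k * (phi rh - phi rl) + eps.
Proof.
  intros Hrl Hrh Hx He.
  set (lo := rl / 2). set (hi := (rh + r0) / 2).
  assert (Hmono : phi rl <= phi rh) by (apply (phi_le_iff phi r0 HK); lra).
  destruct (rate_slack k (phi rh - phi rl) eps Hk ltac:(lra) He) as [b [Hb Hslack]].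
  set (g := fun v => phi (clamp lo hi (f v))).
  assert (Hgx : g x = phi rh) by (unfold g; rewrite Hx, clamp_id; unfold lo, hi; lra).
  destruct (ekeland_level g (phi rl) b Hcomp x) as [z [Hz1 Hz2]].
  - apply mcontinuous_phi_clamp; unfold lo, hi; lra.
  - lra.
  - lra.
  - intros z Hz1 Hz2 delta Hd. rewrite Hgx in Hz2. unfold g in Hz1, Hz2.
    destruct (clamp_pinned lo hi rl rh (f z)) as [Hid Hfz]; [unfold lo; lra|lra|unfold hi; lra|lra|].
    apply descends_clamp; [unfold lo, hi; lra| |exact Hd].
    intros delta' Hd'. apply comp_descends; [split|..]; lra.
  - unfold g in Hz1. rewrite Hgx in Hz2.
    destruct (clamp_pinned lo hi rl rl (f z)) as [Hid Hfz]; [unfold lo; lra|lra|unfold hi; lra|lra|].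
    exists z. split; [lra|]. apply Hslack. lra.
Qed.

Lemma reach_upper_level x rl rh eps : 0 < rl < rh -> rh < r0 -> f x = rl -> 0 < eps ->
  exists z, f z = rh /\ mdist x z <= k * (phi rh - phi rl) + eps.
Proof.
  intros Hrl Hrh Hx He.
  set (lo := rl / 2). set (hi := (rh + r0) / 2).
  assert (Hmono : phi rl <= phi rh) by (apply (phi_le_iff phi r0 HK); lra).
  destruct (rate_slack k (phi rh - phi rl) eps Hk ltac:(lra) He) as [b [Hb Hslack]].
  set (g := fun v => - phi (clamp lo hi (f v))).
  assert (Hgx : g x = - phi rl) by (unfold g; rewrite Hx, clamp_id; unfold lo, hi; lra).
  destruct (ekeland_level g (- phi rh) b Hcomp x) as [z [Hz1 Hz2]].
  - apply mcontinuous_opp, mcontinuous_phi_clamp; unfold lo, hi; lra.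
  - lra.
  - lra.
  - intros z Hz1 Hz2 delta Hd. rewrite Hgx in Hz2. unfold g in Hz1, Hz2.
    destruct (clamp_pinned lo hi rl rh (f z)) as [Hid Hfz]; [unfold lo; lra|lra|unfold hi; lra|lra|].
    apply (descends_clamp (fun t => - phi t)); [unfold lo, hi; lra| |exact Hd].
    intros delta' Hd'. apply comp_ascends; [split|..]; lra.
  - unfold g in Hz1. rewrite Hgx in Hz2.
    destruct (clamp_pinned lo hi rh rh (f z)) as [Hid Hfz]; [unfold lo; lra|lra|unfold hi; lra|lra|].
    exists z. split; [lra|]. apply Hslack. lra.
Qed.

Lemma dist_level_le x r1 r2 : 0 < r1 < r0 -> 0 < r2 < r0 -> f x = r1 ->
  Rbar_le (dist_set x (level f r2)) (k * Rabs (phi r1 - phi r2)).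
Proof.
  intros H1 H2 Hx. apply dist_set_le_eps. intros eps He.
  destruct (Rtotal_order r1 r2) as [h|[<-|h]].
  - destruct (reach_upper_level x r1 r2 eps ltac:(lra) ltac:(lra) Hx He) as [z [Hz Hd]].
    exists z. split; [exact Hz|]. rewrite Rabs_minus_sym, Rabs_right; [lra|].
    apply Rge_minus, Rle_ge, (phi_le_iff phi r0 HK); lra.
  - exists x. split; [exact Hx|]. rewrite mdist_self, Rminus_diag, Rabs_R0. lra.
  - destruct (reach_lower_level x r2 r1 eps ltac:(lra) ltac:(lra) Hx He) as [z [Hz Hd]].
    exists z. split; [exact Hz|]. rewrite Rabs_right; [lra|].
    apply Rge_minus, Rle_ge, (phi_le_iff phi r0 HK); lra.
Qed.

Lemma hausdorff_level_le r1 r2 : 0 < r1 < r0 -> 0 < r2 < r0 ->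
  Rbar_le (hausdorff_dist (level f r1) (level f r2)) (k * Rabs (phi r1 - phi r2)).
Proof.
  intros H1 H2. apply Rbar_lub_le. intros t [[x [Hx ->]]|[x [Hx ->]]].
  - now apply dist_level_le.
  - rewrite Rabs_minus_sym. now apply dist_level_le.
Qed.

End SlopeBound.
End LevelSets.

Theorem corollary2p7 (X : MetricSpace) (f : X -> R) (r0 k : R) (phi : R -> R) (L : Rbar) :
  complete_metric X ->
  mcontinuous f ->
  0 < r0 -> 0 < k ->
  strongly_slope_regular f (band f r0) ->
  inK phi r0 ->
  (* L = phi(r0) := lim_{r -> r0^-} phi r *)
  filterlim phi (at_left r0) (Rbar_locally L) ->
  let cond_i := metric_regular_level X f phi r0 L k in
  let cond_ii := forall r1 r2, 0 < r1 < r0 -> 0 < r2 < r0 ->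
      Rbar_le (hausdorff_dist (level f r1) (level f r2))
              (Finite (k * Rabs (phi r1 - phi r2))) in
  let cond_iii := forall x, band f r0 x ->
      Rbar_le (Finite (1 / k)) (slope (fun z => phi (f z)) x) in
  (cond_i <-> cond_ii) /\ (cond_ii <-> cond_iii).
Proof.
  intros Hcomp Hf _ Hk Hreg HK HL cond_i cond_ii cond_iii.
  assert (i_iii : cond_i -> cond_iii) by exact (slope_comp_ge_of_metric_regular X f r0 k phi Hk HK L HL).
  assert (iii_ii : cond_iii -> cond_ii)
    by exact (hausdorff_level_le X f r0 k phi Hf Hk HK Hcomp Hreg).
  assert (ii_i : cond_ii -> cond_i) by exact (fun H => metric_regular_of_hausdorff_level_le X f r0 k phi HK H L).
  tauto.
Qed.
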